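(* Let $(E,P,\vartheta)$ be a bipolar metric space and let $F\colon E\cup P\to E\cup P$ satisfy $F(E)\subseteq E$, $F(P)\subseteq P$. Assume there exist $\pi\in(0,1)$, an integer $\sigma\geq1$ and constants $q_1,\dots,q_\sigma,H_1,\dots,H_\sigma\in(0,\infty)$ such that $$\sum_{\upsilon=1}^{\sigma}q_\upsilon\,\vartheta^\upsilon(Fe,Ff)\leq\pi\sum_{\upsilon=1}^{\sigma}q_\upsilon\big[\vartheta^\upsilon(e,f)+H_\upsilon\,\vartheta^\upsilon(Fe,f)\big]\quad\text{for all } e\in E,\ f\in P.$$ Then $F$ is Picard-continuous.
   Context: A bipolar metric space is a triple $(E,P,\vartheta)$ where $E,P$ are nonempty sets and $\vartheta\colon E\times P\to[0,\infty)$ satisfies: (1) for $e\in E$, $f\in P$, $\vartheta(e,f)=0$ iff $e=f$; (2) $\vartheta(e,f)=\vartheta(f,e)$ whenever $e,f\in E\cap P$; (3) $\vartheta(e,f)\leq\vartheta(e,z)+\vartheta(r,z)+\vartheta(r,f)$ for all $e,r\in E$, $z,f\in P$. $F$ is Picard-continuous if for all $g\in E$, $h\in P$: $\lim_{n\to\infty}\vartheta(F^ng,h)=0$ implies $\lim_{n\to\infty}\vartheta(F(F^ng),Fh)=0$, where $F^0g=g$, $F^{n+1}g=F(F^ng)$. $\vartheta^\upsilon$ denotes the $\upsilon$-th power of $\vartheta$. *)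

From Stdlib Require Import Reals.
Open Scope R_scope.

(* A bipolar metric space (E,P,theta): E and P are subsets (predicates) of a
   common ambient type X (so that E ∩ P and E ∪ P make sense); theta is a
   function X -> X -> R of which only the values on E × P matter. *)
Definition bipolar_metric_space {X : Type} (E P : X -> Prop)
  (theta : X -> X -> R) : Prop :=
  (exists e, E e) /\ (exists p, P p) /\
  (forall e f, E e -> P f -> 0 <= theta e f) /\
  (forall e f, E e -> P f -> (theta e f = 0 <-> e = f)) /\
  (forall e f, E e -> P e -> E f -> P f -> theta e f = theta f e) /\
  (forall e r z f, E e -> E r -> P z -> P f ->
     theta e f <= theta e z + theta r z + theta r f).

Fixpoint iterF {X : Type} (F : X -> X) (n : nat) (g : X) : X :=
  match n with
  | O => g
  | S m => F (iterF F m g)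
  end.

Definition picard_continuous {X : Type} (E P : X -> Prop)
  (theta : X -> X -> R) (F : X -> X) : Prop :=
  forall g h, E g -> P h ->
    Un_cv (fun n => theta (iterF F n g) h) 0 ->
    Un_cv (fun n => theta (F (iterF F n g)) (F h)) 0.

Fixpoint sum1 (s : nat) (a : nat -> R) : R :=
  match s with
  | O => 0
  | S m => sum1 m a + a (S m)
  end.

(* The hypothesis [theta (F^n g) h --> 0] also gives [theta (F^(n+1) g) h --> 0], so the right-hand
   side of the contraction at [(F^n g, h)] tends to 0, being a polynomial without constant term in
   these two distances.  Its left-hand side dominates [q_1 * theta (F^(n+1) g) (F h) >= 0], which
   is therefore squeezed to 0. *)
From Stdlib Require Import Reals Lra Lia.
From Coquelicot Require Import Coquelicot.
Open Scope R_scope.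

Lemma is_lim_seq_pow (u : nat -> R) (l : R) (k : nat) :
  is_lim_seq u l -> is_lim_seq (fun n => u n ^ k) (l ^ k).
Proof.
  intro Hu; induction k as [|k IHk]; simpl.
  - apply is_lim_seq_const.
  - exact (is_lim_seq_mult' _ _ _ _ Hu IHk).
Qed.

Lemma is_lim_seq_sum1 (s : nat) (a : nat -> nat -> R) (L : nat -> R) :
  (forall k, is_lim_seq (fun n => a n k) (L k)) ->
  is_lim_seq (fun n => sum1 s (a n)) (sum1 s L).
Proof.
  intro Ha; induction s as [|s IHs]; simpl.
  - apply is_lim_seq_const.
  - exact (is_lim_seq_plus' _ _ _ _ IHs (Ha (S s))).
Qed.

Lemma sum1_eq0 (s : nat) (a : nat -> R) :
  (forall u, (1 <= u <= s)%nat -> a u = 0) -> sum1 s a = 0.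
Proof.
  induction s as [|s IHs]; intro Ha; simpl; [reflexivity|].
  rewrite IHs, (Ha (S s)) by (lia || (intros; apply Ha; lia)); ring.
Qed.

Lemma sum1_ge_first (s : nat) (a : nat -> R) :
  (1 <= s)%nat -> (forall u, (1 <= u <= s)%nat -> 0 <= a u) -> a 1%nat <= sum1 s a.
Proof.
  induction s as [|s IHs]; intros Hs Ha; [lia|].
  change (sum1 (S s) a) with (sum1 s a + a (S s)).
  destruct s as [|s]; [simpl; lra|].
  assert (a 1%nat <= sum1 (S s) a) by (apply IHs; [lia | intros; apply Ha; lia]).
  assert (0 <= a (S (S s))) by (apply Ha; lia).
  lra.
Qed.

Lemma sum1_pow_ge_first (s : nat) (q : nat -> R) (t : R) :
  (1 <= s)%nat -> (forall u, (1 <= u <= s)%nat -> 0 < q u) -> 0 <= t ->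
  q 1%nat * t <= sum1 s (fun u => q u * t ^ u).
Proof.
  intros Hs Hq Ht.
  replace (q 1%nat * t) with (q 1%nat * t ^ 1) by ring.
  apply (sum1_ge_first s (fun u => q u * t ^ u)); [exact Hs|].
  intros u Hu; apply Rmult_le_pos; [left; exact (Hq u Hu) | exact (pow_le t u Ht)].
Qed.

Lemma is_lim_seq_0_scaled_le (c : R) (u w : nat -> R) :
  0 < c -> (forall n, 0 <= u n /\ c * u n <= w n) -> is_lim_seq w 0 -> is_lim_seq u 0.
Proof.
  intros Hc Huw Hw.
  apply (is_lim_seq_le_le (fun _ => 0) u (fun n => / c * w n)).
  - intro n; destruct (Huw n) as [Hu Hcu]; split; [exact Hu|].
    apply (Rmult_le_reg_l c); [exact Hc|].
    rewrite <- Rmult_assoc, Rinv_r, Rmult_1_l by lra; exact Hcu.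
  - apply is_lim_seq_const.
  - replace (Finite 0) with (Finite (/ c * 0)) by (f_equal; ring).
    exact (is_lim_seq_mult' _ _ _ _ (is_lim_seq_const (/ c)) Hw).
Qed.

Lemma iterF_closed {X : Type} (E : X -> Prop) (F : X -> X) (g : X) (n : nat) :
  (forall e, E e -> E (F e)) -> E g -> E (iterF F n g).
Proof. intros HF Hg; induction n; simpl; auto. Qed.

Theorem proposition4p4 (X : Type) (E P : X -> Prop) (theta : X -> X -> R)
  (F : X -> X)
  (Hbms : bipolar_metric_space E P theta)
  (HFE : forall e, E e -> E (F e))
  (HFP : forall p, P p -> P (F p))
  (pi : R) (Hpi : 0 < pi < 1)
  (sigma : nat) (Hsigma : (1 <= sigma)%nat)
  (q H : nat -> R)
  (Hq : forall u, (1 <= u <= sigma)%nat -> 0 < q u)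
  (HH : forall u, (1 <= u <= sigma)%nat -> 0 < H u)
  (Hcontr : forall e f, E e -> P f ->
     sum1 sigma (fun u => q u * (theta (F e) (F f)) ^ u)
     <= pi * sum1 sigma (fun u => q u * ((theta e f) ^ u + H u * (theta (F e) f) ^ u))) :
  picard_continuous E P theta F.
Proof.
  destruct Hbms as (_ & _ & Htheta_ge0 & _).
  intros g h Hg Hh Hcv; apply is_lim_seq_Reals in Hcv; apply is_lim_seq_Reals.
  set (a n := theta (iterF F n g) h).
  assert (Hcv_next : is_lim_seq (fun n => a (S n)) 0) by exact (proj1 (is_lim_seq_incr_1 a 0) Hcv).
  set (rhs n := pi * sum1 sigma (fun u => q u * (a n ^ u + H u * a (S n) ^ u))).
  assert (Hrhs : is_lim_seq rhs 0).
  { replace (Finite 0) with (Finite (pi * sum1 sigma (fun u => q u * (0 ^ u + H u * 0 ^ u)))).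
    2:{ f_equal; rewrite sum1_eq0; [ring|]. intros u Hu; rewrite pow_i by lia; ring. }
    apply is_lim_seq_mult'; [apply is_lim_seq_const|].
    apply is_lim_seq_sum1; intro u.
    apply is_lim_seq_mult'; [apply is_lim_seq_const|].
    apply is_lim_seq_plus'; [exact (is_lim_seq_pow _ _ u Hcv)|].
    apply is_lim_seq_mult'; [apply is_lim_seq_const | exact (is_lim_seq_pow _ _ u Hcv_next)]. }
  apply (is_lim_seq_0_scaled_le (q 1%nat) _ rhs); [apply Hq; lia | | exact Hrhs].
  intro n.
  assert (HEn : E (iterF F n g)) by exact (iterF_closed E F g n HFE Hg).
  assert (Hdist_ge0 : 0 <= theta (F (iterF F n g)) (F h)) by (apply Htheta_ge0; auto).
  split; [exact Hdist_ge0|].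
  eapply Rle_trans; [apply (sum1_pow_ge_first sigma); auto | exact (Hcontr _ _ HEn Hh)].
Qed.
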